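(* Let $\beta\in(3/2,\beta^*]$, let $\vec z\in S_\beta$ and let $\vec z=\sum_{i=1}^\infty a_i\beta^{-i}$ with $a_i\in\{\vec q_0,\vec q_1,\vec q_2\}$. Then: (i) if $\vec z\in E_i$ for some $i\in\{0,1,2\}$, then $a_1=\vec q_i$; (ii) if $\vec z\in C_{ij}$ for some $ij\in\{01,12,02\}$, then $a_1\in\{\vec q_i,\vec q_j\}$.
   Context: $\beta^*\approx1.5437$ is the real root of $x^3-2x^2+2x=2$. $\vec q_0=(0,0)$, $\vec q_1=(1,0)$, $\vec q_2=(0,1)$, $f_{\vec q_i}(\vec z)=(\vec z+\vec q_i)/\beta$ (write $f_i=f_{\vec q_i}$), $S_\beta$ the attractor of this IFS. $H=\{(x,y):x<\frac1\beta,\ y<\frac1\beta,\ x+y>\frac{1}{\beta(\beta-1)}\}$. Define $\tilde E_0=([0,\frac1\beta)\times[0,\frac1\beta))\setminus H$; $\tilde E_1=\{0\le y<\frac1\beta,\ \frac{1}{\beta(\beta-1)}<x+y\le\frac1{\beta-1}\}\setminus H$; $\tilde E_2=\{0\le x<\frac1\beta,\ \frac{1}{\beta(\beta-1)}<x+y\le\frac1{\beta-1}\}\setminus H$; $\tilde C_{01}=\{x\ge\frac1\beta,\ y\ge0,\ x+y\le\frac{1}{\beta(\beta-1)}\}$; $\tilde C_{12}=\{x\ge\frac1\beta,\ y\ge\frac1\beta,\ x+y\le\frac1{\beta-1}\}$; $\tilde C_{02}=\{x\ge0,\ y\ge\frac1\beta,\ x+y\le\frac{1}{\beta(\beta-1)}\}$.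 For $\{i,j,k\}=\{0,1,2\}$ let $E_i=\bigl(\tilde E_i\cup\bigcup_{n\ge1}f_jf_i^n(H)\cup\bigcup_{n\ge1}f_kf_i^n(H)\bigr)\setminus\bigcup_{n\ge0}f_i^n(H)$, and for $ij\in\{01,12,02\}$ let $C_{ij}=\tilde C_{ij}\setminus\bigl(\bigcup_{n\ge1}f_if_j^n(H)\cup\bigcup_{n\ge1}f_jf_i^n(H)\bigr)$. *)

From Stdlib Require Import Reals Lra.
Open Scope R_scope.

(* Digits: D0, D1, D2 stand for q_0 = (0,0), q_1 = (1,0), q_2 = (0,1). *)
Inductive digit : Set := D0 | D1 | D2.

Definition qx (d : digit) : R := match d with D1 => 1 | _ => 0 end.
Definition qy (d : digit) : R := match d with D2 => 1 | _ => 0 end.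

Definition f (beta : R) (d : digit) (p : R * R) : R * R :=
  ((fst p + qx d) / beta, (snd p + qy d) / beta).

(* a : nat -> digit codes the sequence a_1, a_2, ... as a 0, a 1, ...;
   z = sum_{i>=1} a_i beta^{-i}, coordinatewise. *)
Definition expansion (beta : R) (a : nat -> digit) (z : R * R) : Prop :=
  infinite_sum (fun n => qx (a n) / beta ^ (S n)) (fst z) /\
  infinite_sum (fun n => qy (a n) / beta ^ (S n)) (snd z).

Definition S_beta (beta : R) (z : R * R) : Prop := exists a, expansion beta a z.

Definition H (beta : R) (p : R * R) : Prop :=
  fst p < 1 / beta /\ snd p < 1 / beta /\
  fst p + snd p > 1 / (beta * (beta - 1)).

Definition Etilde (beta : R) (i : digit) (p : R * R) : Prop :=
  let x := fst p in let y := snd p in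
  (match i with
   | D0 => 0 <= x < 1 / beta /\ 0 <= y < 1 / beta
   | D1 => 0 <= y < 1 / beta /\
           1 / (beta * (beta - 1)) < x + y <= 1 / (beta - 1)
   | D2 => 0 <= x < 1 / beta /\
           1 / (beta * (beta - 1)) < x + y <= 1 / (beta - 1)
   end) /\ ~ H beta p.

Definition in_fj_fin_H (beta : R) (j i : digit) (n : nat) (z : R * R) : Prop :=
  exists w, H beta w /\ z = f beta j (Nat.iter n (f beta i) w).

Definition E (beta : R) (i : digit) (z : R * R) : Prop :=
  (Etilde beta i z \/
   exists j n, j <> i /\ (1 <= n)%nat /\ in_fj_fin_H beta j i n z) /\
  ~ (exists n w, H beta w /\ z = Nat.iter n (f beta i) w).

Inductive dpair : Set := P01 | P12 | P02.
Definition pfst (p : dpair) : digit := match p with P01 => D0 | P12 => D1 | P02 => D0 end.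
Definition psnd (p : dpair) : digit := match p with P01 => D1 | P12 => D2 | P02 => D2 end.

Definition Ctilde (beta : R) (p : dpair) (z : R * R) : Prop :=
  let x := fst z in let y := snd z in
  match p with
  | P01 => x >= 1 / beta /\ y >= 0 /\ x + y <= 1 / (beta * (beta - 1))
  | P12 => x >= 1 / beta /\ y >= 1 / beta /\ x + y <= 1 / (beta - 1)
  | P02 => x >= 0 /\ y >= 1 / beta /\ x + y <= 1 / (beta * (beta - 1))
  end.

Definition Cij (beta : R) (p : dpair) (z : R * R) : Prop :=
  Ctilde beta p z /\
  ~ (exists n, (1 <= n)%nat /\
       (in_fj_fin_H beta (pfst p) (psnd p) n z \/
        in_fj_fin_H beta (psnd p) (pfst p) n z)).

(** A point of [S_beta] lies in the triangle [T = {x, y >= 0, x + y <= 1/(beta-1)}]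
    and is [f_d z'] for the first digit [d] of any of its expansions and some
    [z' in S_beta].  The three first-level pieces [f_0 T], [f_1 T], [f_2 T] lie
    respectively below the line [x + y = 1/(beta(beta-1))], right of [x = 1/beta]
    and above [y = 1/beta], which pins the first digit down on [Etilde_i] and
    [Ctilde_ij] (for the latter, [beta > 3/2] separates [f_k T] from [Ctilde_ij]
    when [k] is the third index).  For the images [f_j f_i^n H], one checks that
    [H] and its [f_i]-orbit stay in a region [R_i] ([hole_region i]) such that
    [f_j R_i] misses [f_k T] whenever [k] differs from [i] and [j]; [j = i] gives by
    induction that [f_i^n H] misses [S_beta], and then a point [f_j f_i^n w] of
    [S_beta] can only have first digit [i]. *)

From Pilot Require Import Defs.
From Stdlib Require Import Reals Lra.
From Coquelicot Require Import Coquelicot.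
(* Coquelicot re-exports [Rtopology.f]; restore [f] as the IFS map. *)
Import Defs.
Open Scope R_scope.

Lemma is_series_zero : is_series (fun _ : nat => 0) 0.
Proof.
  apply (filterlim_ext (fun _ => 0)); [|apply filterlim_const].
  intro n; rewrite sum_n_const; simpl; ring.
Qed.

Lemma is_series_le (u v : nat -> R) (lu lv : R) :
  (forall n, 0 <= u n <= v n) -> is_series u lu -> is_series v lv -> lu <= lv.
Proof.
  intros Huv Hu Hv.
  rewrite <- (is_series_unique _ _ Hu), <- (is_series_unique _ _ Hv).
  apply Series_le; [exact Huv | exists lv; exact Hv].
Qed.

Lemma is_series_geom_shift (b : R) :
  1 < b -> is_series (fun n => 1 / b ^ S n) (1 / (b - 1)).
Proof.
  intro Hb.
  assert (Hq : Rabs (/ b) < 1).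
  { rewrite Rabs_pos_eq by (left; apply Rinv_0_lt_compat; lra).
    rewrite <- Rinv_1; apply Rinv_lt_contravar; lra. }
  pose proof (is_series_scal_l (/ b) _ _ (is_series_geom _ Hq)) as Hgeom.
  replace (1 / (b - 1)) with (/ b * / (1 - / b)) by (field; lra).
  apply is_series_ext with (2 := Hgeom); intro n.
  unfold scal; simpl; unfold mult; simpl.
  rewrite pow_inv; field; split; [apply pow_nonzero|]; lra.
Qed.

Lemma is_series_shift_scale (b : R) (u : nat -> R) (l : R) :
  0 < b -> is_series (fun n => u n / b ^ S n) l ->
  is_series (fun n => u (S n) / b ^ S n) (b * l - u O).
Proof.
  intros Hb Hl.
  assert (Htail : is_series (fun n => u (S n) / b ^ S (S n)) (l - u O / b)).
  { assert (Hsplit : l = plus (l - u O / b) (u O / b ^ 1)) by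
      (unfold plus; simpl; field; lra).
    rewrite Hsplit in Hl; exact (is_series_incr_1 _ _ Hl). }
  pose proof (is_series_scal_l b _ _ Htail) as Hscaled.
  replace (b * l - u O) with (b * (l - u O / b)) by (field; lra).
  apply is_series_ext with (2 := Hscaled); intro n.
  unfold scal; simpl; unfold mult; simpl.
  field; split; [apply pow_nonzero|]; lra.
Qed.

Lemma digit_series_bounds (b : R) (g : digit -> R) (a : nat -> digit) (l : R) :
  1 < b -> (forall d, 0 <= g d <= 1) ->
  is_series (fun n => g (a n) / b ^ S n) l -> 0 <= l <= 1 / (b - 1).
Proof.
  intros Hb Hg Hl.
  assert (Hterm : forall n, 0 <= g (a n) / b ^ S n <= 1 / b ^ S n).
  { intro n; assert (0 < b ^ S n) by (apply pow_lt; lra).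
    specialize (Hg (a n)); unfold Rdiv; split.
    - apply Rmult_le_pos; [lra | left; apply Rinv_0_lt_compat; lra].
    - apply Rmult_le_compat_r; [left; apply Rinv_0_lt_compat|]; lra. }
  split.
  - refine (is_series_le (fun _ => 0) _ _ _ _ is_series_zero Hl).
    intro n; split; [lra | apply Hterm].
  - exact (is_series_le _ _ _ _ Hterm Hl (is_series_geom_shift b Hb)).
Qed.

Definition triangle (b : R) (p : R * R) : Prop :=
  0 <= fst p /\ 0 <= snd p /\ fst p + snd p <= 1 / (b - 1).

Lemma expansion_triangle (b : R) (a : nat -> digit) (z : R * R) :
  1 < b -> expansion b a z -> triangle b z.
Proof.
  intros Hb [Hx Hy]; apply is_series_Reals in Hx; apply is_series_Reals in Hy.
  assert (Hxy : is_series (fun n => (fun d => qx d + qy d) (a n) / b ^ S n)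
                          (fst z + snd z)).
  { apply (is_series_ext _ _ _ (fun n => eq_sym (Rdiv_plus_distr _ _ _))).
    exact (is_series_plus _ _ _ _ Hx Hy). }
  pose proof (digit_series_bounds b qx a _ Hb ltac:(intros []; simpl; lra) Hx).
  pose proof (digit_series_bounds b qy a _ Hb ltac:(intros []; simpl; lra) Hy).
  pose proof (digit_series_bounds b (fun d => qx d + qy d) a _ Hb
                ltac:(intros []; simpl; lra) Hxy).
  unfold triangle; lra.
Qed.

Lemma expansion_tail (b : R) (a : nat -> digit) (z : R * R) :
  0 < b -> expansion b a z ->
  exists z', expansion b (fun n => a (S n)) z' /\ z = f b (a O) z'.
Proof.
  intros Hb [Hx Hy]; apply is_series_Reals in Hx; apply is_series_Reals in Hy.
  exists (b * fst z - qx (a O), b * snd z - qy (a O)); split.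
  - split; apply is_series_Reals; simpl.
    + exact (is_series_shift_scale b (fun n => qx (a n)) _ Hb Hx).
    + exact (is_series_shift_scale b (fun n => qy (a n)) _ Hb Hy).
  - destruct z as [x y]; unfold f; simpl; f_equal; field; lra.
Qed.

Lemma digit_eq_dec (d d' : digit) : {d = d'} + {d <> d'}.
Proof. decide equality. Qed.

Lemma f_eq_coords (b : R) (j k : digit) (u v : R * R) :
  b <> 0 -> f b j u = f b k v ->
  fst u + qx j = fst v + qx k /\ snd u + qy j = snd v + qy k.
Proof.
  unfold f; intros Hb Huv; injection Huv as Hx Hy.
  split; [apply (Rmult_eq_reg_r (/ b)) | apply (Rmult_eq_reg_r (/ b))];
    auto; apply Rinv_neq_0_compat, Hb.
Qed.

Lemma f_inj (b : R) (d : digit) (u v : R * R) : b <> 0 -> f b d u = f b d v -> u = v.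
Proof.
  intros Hb Huv; destruct (f_eq_coords b d d u v Hb Huv).
  destruct u, v; simpl in *; f_equal; lra.
Qed.

Section FirstDigit.

Variable b : R.
Hypothesis Hb : 1 < b.

Let c := 1 / b.
Let e := 1 / (b - 1).

Lemma inv_b_bm1 : 1 / (b * (b - 1)) = e - c.
Proof. unfold e, c; field; lra. Qed.

Lemma e_mul_c : e * c = e - c.
Proof. unfold e, c; field; lra. Qed.

Lemma div_b (u : R) : u / b = u * c.
Proof. unfold c; field; lra. Qed.

Lemma c_bounds : 0 < c < 1.
Proof.
  unfold c; rewrite Rdiv_1_l; split; [apply Rinv_0_lt_compat; lra|].
  rewrite <- Rinv_1; apply Rinv_1_lt_contravar; lra.
Qed.

Lemma f_triangle (d : digit) (v : R * R) :
  triangle b v ->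
  let p := f b d v in
  0 <= fst p /\ 0 <= snd p /\
  match d with
  | D0 => fst p + snd p <= e - c
  | D1 => c <= fst p
  | D2 => c <= snd p
  end.
Proof.
  unfold triangle, f; fold e; intros Tv; simpl.
  rewrite !div_b; pose proof c_bounds; pose proof e_mul_c.
  destruct d; simpl; nra.
Qed.

Lemma f_triangle_not_H (d : digit) (v : R * R) : triangle b v -> ~ H b (f b d v).
Proof.
  intros Tv; pose proof (f_triangle d v Tv) as Hp; cbv zeta in Hp.
  unfold H; rewrite inv_b_bm1; fold c.
  destruct d; lra.
Qed.

Lemma e_lt_3c : 3 / 2 < b -> e < 3 * c.
Proof.
  intro Hb32; unfold e, c; apply (Rmult_lt_reg_r (b * (b - 1))); [nra|].
  field_simplify; lra.
Qed.

Lemma expansion_first_step (a : nat -> digit) (z : R * R) :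
  expansion b a z -> exists z', S_beta b z' /\ triangle b z' /\ z = f b (a O) z'.
Proof.
  intro Ha; destruct (expansion_tail b a z ltac:(lra) Ha) as [z' [Ha' ->]].
  exists z'; split; [exists (fun n => a (S n)); exact Ha' | split; [|reflexivity]].
  exact (expansion_triangle b _ z' Hb Ha').
Qed.

Lemma S_beta_not_H (z : R * R) : S_beta b z -> ~ H b z.
Proof.
  intros [a Ha]; destruct (expansion_first_step a z Ha) as [z' [_ [Tz' ->]]].
  exact (f_triangle_not_H _ _ Tz').
Qed.

Lemma Etilde_first_digit (i d : digit) (v : R * R) :
  triangle b v -> Etilde b i (f b d v) -> d = i.
Proof.
  intros Tv [Hi _]; pose proof (f_triangle d v Tv) as Hp; cbv zeta in Hp.
  rewrite inv_b_bm1 in Hi; fold c e in Hi; pose proof c_bounds.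
  destruct i, d; cbv zeta iota beta in Hi, Hp; auto; exfalso; lra.
Qed.

Lemma Ctilde_first_digit (p : dpair) (d : digit) (v : R * R) :
  3 / 2 < b -> triangle b v -> Ctilde b p (f b d v) -> d = pfst p \/ d = psnd p.
Proof.
  intros Hb32 Tv Hp; pose proof (f_triangle d v Tv) as Hd; cbv zeta in Hd.
  unfold Ctilde in Hp; rewrite ?inv_b_bm1 in Hp; fold c e in Hp.
  pose proof c_bounds; pose proof (e_lt_3c Hb32).
  destruct p, d; cbv zeta iota beta in Hp, Hd |- *; auto; exfalso; lra.
Qed.

Definition hole_region (i : digit) (p : R * R) : Prop :=
  match i with
  | D0 => fst p < c /\ snd p < c
  | D1 => snd p < c /\ fst p + snd p > e - c
  | D2 => fst p < c /\ fst p + snd p > e - c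
  end.

Lemma H_hole_region (i : digit) (p : R * R) : H b p -> hole_region i p.
Proof. unfold H, hole_region; rewrite inv_b_bm1; fold c; destruct i; lra. Qed.

Lemma hole_region_f (i : digit) (p : R * R) :
  hole_region i p -> hole_region i (f b i p).
Proof.
  pose proof c_bounds; pose proof e_mul_c.
  destruct i; unfold f; simpl; rewrite !div_b; intros; nra.
Qed.

Lemma hole_region_iter (i : digit) (n : nat) (w : R * R) :
  H b w -> hole_region i (Nat.iter n (f b i) w).
Proof.
  intro Hw; induction n as [|n IH]; simpl.
  - exact (H_hole_region i w Hw).
  - exact (hole_region_f i _ IH).
Qed.

Lemma hole_region_f_disjoint (i j k : digit) (u v : R * R) :
  hole_region i u -> triangle b v -> k <> i -> k <> j -> f b j u <> f b k v.
Proof.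
  intros Hu Tv Hki Hkj Huv.
  destruct (f_eq_coords b j k u v ltac:(lra) Huv).
  unfold triangle in Tv; fold e in Tv; pose proof c_bounds.
  destruct i, j, k; simpl in *; try congruence; lra.
Qed.

Lemma iter_H_not_S_beta (i : digit) (n : nat) (w : R * R) :
  H b w -> ~ S_beta b (Nat.iter n (f b i) w).
Proof.
  intro Hw; induction n as [|n IH]; simpl.
  - exact (fun Sw => S_beta_not_H w Sw Hw).
  - intros [a Ha]; destruct (expansion_first_step a _ Ha) as [z' [Sz' [Tz' Hz]]].
    destruct (digit_eq_dec (a O) i) as [Hai|Hai].
    + rewrite Hai in Hz; apply f_inj in Hz; [|lra].
      rewrite Hz in IH; exact (IH Sz').
    + exact (hole_region_f_disjoint i i (a O) _ z' (hole_region_iter i n w Hw)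
               Tz' Hai Hai Hz).
Qed.

Lemma E_first_digit (i : digit) (a : nat -> digit) (z : R * R) :
  expansion b a z -> E b i z -> a O = i.
Proof.
  intros Ha [HE _]; destruct (expansion_first_step a z Ha) as [z' [Sz' [Tz' ->]]].
  destruct HE as [Hi | [j [n [_ [_ [w [Hw Hz]]]]]]].
  - exact (Etilde_first_digit i (a O) z' Tz' Hi).
  - destruct (digit_eq_dec (a O) i) as [Hai|Hai]; [exact Hai | exfalso].
    destruct (digit_eq_dec (a O) j) as [Haj|Haj].
    + rewrite Haj in Hz; apply f_inj in Hz; [|lra].
      rewrite Hz in Sz'; exact (iter_H_not_S_beta i n w Hw Sz').
    + exact (hole_region_f_disjoint i j (a O) _ z' (hole_region_iter i n w Hw)
               Tz' Hai Haj (eq_sym Hz)).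
Qed.

Lemma Cij_first_digit (p : dpair) (a : nat -> digit) (z : R * R) :
  3 / 2 < b -> expansion b a z -> Cij b p z -> a O = pfst p \/ a O = psnd p.
Proof.
  intros Hb32 Ha [Hp _]; destruct (expansion_first_step a z Ha) as [z' [_ [Tz' ->]]].
  exact (Ctilde_first_digit p (a O) z' Hb32 Tz' Hp).
Qed.

End FirstDigit.

Theorem lemma6p4 (beta bstar : R) (z : R * R) (a : nat -> digit) :
  bstar ^ 3 - 2 * bstar ^ 2 + 2 * bstar = 2 ->
  3 / 2 < beta <= bstar ->
  S_beta beta z ->
  expansion beta a z ->
  (forall i : digit, E beta i z -> a 0%nat = i) /\
  (forall p : dpair, Cij beta p z -> a 0%nat = pfst p \/ a 0%nat = psnd p).
Proof.
  intros _ [Hb _] _ Ha; split.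
  - intro i; exact (E_first_digit beta ltac:(lra) i a z Ha).
  - intro p; exact (Cij_first_digit beta ltac:(lra) p a z Hb Ha).
Qed.
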